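(* Let $P$ be a finite poset and fix $\alpha^{B},\omega^{B}>0$. For every $\pi\in\mathbb R_{>0}^P$ and every $p\in P$, \[ \lim_{n\to\infty}\Big(\prod_{i=0}^{n-1}T_p^{B}\big((\rho^{B})^i(\pi)\big)\Big)^{1/n}=1, \] i.e. $T_p^{B}$ is multiplicatively $1$-mesic under birational rowmotion.
   Context: Let $\widehat P$ be $P$ with a new minimum $\widehat0$ and maximum $\widehat1$ adjoined; any $\pi\in\mathbb R_{>0}^P$ is extended by $\pi(\widehat0)=\alpha^{B}$, $\pi(\widehat1)=\omega^{B}$. For $p\in P$ the birational toggle $\tau_p^{B}$ changes only the value at $p$, replacing it by $\big(\sum_{r\in\widehat P,\,r\lessdot p}\pi(r)\big)\big/\big(\pi(p)\sum_{r\in\widehat P,\,p\lessdot r}\pi(r)^{-1}\big)$. Birational rowmotion is $\rho^{B}=\tau^{B}_{p_1}\circ\cdots\circ\tau^{B}_{p_m}$ for any linear extension $p_1,\dots,p_m$ of $P$ (independent of the choice). Define $T_p^{+,B}(\pi)=\pi(p)/\sum_{r\lessdot p}\pi(r)$, $T_p^{-,B}(\pi)=1/\big(\pi(p)\sum_{p\lessdot r}\pi(r)^{-1}\big)$ (covers taken in $\widehat P$), and $T_p^{B}=T_p^{+,B}/T_p^{-,B}$. *)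

From HB Require Import structures.
From mathcomp Require Import all_boot all_order all_algebra.
From mathcomp Require Import all_classical all_reals all_analysis.
Set Implicit Arguments. Unset Strict Implicit. Unset Printing Implicit Defensive.
Import Order.TTheory GRing.Theory Num.Theory.
Local Open Scope ring_scope.

Section Birational.
Variables (d : Order.disp_t) (P : finPOrderType d) (R : realType).

(* The bounded poset \hat P: None = \hat 0, Some None = \hat 1,
   Some (Some p) = p. *)
Definition hatP := option (option P).

Definition hle (x y : hatP) : bool :=
  match x, y with
  | None, _ => true
  | _, None => false
  | Some None, Some None => true
  | Some None, Some (Some _) => false
  | Some (Some _), Some None => true
  | Some (Some p), Some (Some q) => (p <= q)%O
  end.

Definition hlt (x y : hatP) : bool := (x != y) && hle x y.

Definition hcov (x y : hatP) : bool :=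
  hlt x y && [forall z : hatP, ~~ (hlt x z && hlt z y)].

Definition hval (alpha omega : R) (pi : P -> R) (x : hatP) : R :=
  match x with
  | None => alpha
  | Some None => omega
  | Some (Some p) => pi p
  end.

Definition inP (p : P) : hatP := Some (Some p).

Definition sum_down alpha omega (pi : P -> R) (p : P) : R :=
  \sum_(r : hatP | hcov r (inP p)) hval alpha omega pi r.

Definition sum_up_inv alpha omega (pi : P -> R) (p : P) : R :=
  \sum_(r : hatP | hcov (inP p) r) (hval alpha omega pi r)^-1.

Definition btoggle alpha omega (p : P) (pi : P -> R) : P -> R :=
  fun q => if q == p then
             sum_down alpha omega pi p / (pi p * sum_up_inv alpha omega pi p)
           else pi q.

Definition linear_extension (l : seq P) : Prop :=
  perm_eq l (enum P) /\ pairwise (fun x y => ~~ (y < x)%O) l.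

Definition browmotion alpha omega (l : seq P) : (P -> R) -> (P -> R) :=
  foldr (fun p f => btoggle alpha omega p \o f) id l.

Definition Tplus alpha omega (p : P) (pi : P -> R) : R :=
  pi p / sum_down alpha omega pi p.

Definition Tminus alpha omega (p : P) (pi : P -> R) : R :=
  (pi p * sum_up_inv alpha omega pi p)^-1.

Definition TB alpha omega (p : P) (pi : P -> R) : R :=
  Tplus alpha omega p pi / Tminus alpha omega p pi.

End Birational.

(* Write pi_n for the n-th iterate of birational rowmotion rho.  Rowmotion
   toggles P from the top down, so the new value at p is computed from the old
   values below p and the new values above p; this says exactly that
   T^-_p(rho pi) = T^+_p(pi).  Hence T_p(pi_i) = T^-_p(pi_(i+1)) / T^-_p(pi_i),
   the product telescopes to T^-_p(pi_n) / T^-_p(pi), and it suffices to bound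
   T^-_p(pi_n) between positive constants independent of n.

   The same identity makes the sum of pi(x)/pi(y) over all covers x <. y of
   \hat P invariant under rowmotion: grouping the mixed sum of
   pi(x)/(rho pi)(y) once by sources and once by targets shows that its terms
   at \hat 0 and at \hat 1 agree, and the remaining terms are those of the
   invariant for rho pi and for pi respectively.  The invariant bounds the ratio
   along every cover, hence, following chains down to \hat 0 and up to \hat 1,
   every label of every pi_n from above and below. *)

From Pilot Require Import Defs.
From HB Require Import structures.
From mathcomp Require Import all_boot all_order all_algebra.
From mathcomp Require Import all_classical all_reals all_analysis.
Import Order.TTheory GRing.Theory Num.Theory numFieldNormedType.Exports.
Set Implicit Arguments. Unset Strict Implicit. Unset Printing Implicit Defensive.
Local Open Scope ring_scope.

Lemma big_option (R : Type) (idx : R) (op : Monoid.com_law idx) (T : finType)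
    (F : option T -> R) :
  \big[op/idx]_(x : option T) F x = op (F None) (\big[op/idx]_(x : T) F (Some x)).
Proof.
rewrite (bigD1 None) //= (reindex_omap Some id) => [|[]//].
by congr (op _ _); apply: eq_bigl => x; rewrite eqxx.
Qed.

Lemma ler_sum_term (R : numDomainType) (I : finType) (P : pred I) (F : I -> R) i :
  P i -> (forall j, P j -> 0 <= F j) -> F i <= \sum_(j | P j) F j.
Proof.
move=> Pi F_ge0; rewrite (bigD1 i) //= lerDl.
by apply: sumr_ge0 => j /andP[/F_ge0].
Qed.

Section Covers.
Variables (T : finType) (lt : rel T).
Hypotheses (ltxx : irreflexive lt) (lt_trans : transitive lt).

Definition covrel x y := lt x y && [forall z, ~~ (lt x z && lt z y)].

Local Notation rank x := #|[set z | lt z x]|.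

Lemma rank_lt x y : lt x y -> (rank x < rank y)%N.
Proof.
move=> xy; apply: proper_card; apply/properP; split.
  by apply/fintype.subsetP => z; rewrite !inE => zx; apply: lt_trans zx xy.
by exists x; rewrite !inE ?xy ?ltxx.
Qed.

Lemma exists_lower_cover x y : lt x y -> exists z, covrel z y.
Proof.
move=> xy; have [z zy zmax] := @arg_maxnP _ x (lt^~ y) (fun z => rank z) xy.
exists z; rewrite /covrel zy; apply/forallP => w; apply/negP => /andP[zw wy].
by have := zmax w wy; rewrite /= leqNgt rank_lt.
Qed.

Lemma exists_upper_cover x y : lt x y -> exists z, covrel x z.
Proof.
move=> xy; have [z xz zmin] := arg_minnP (fun z => rank z) xy.
exists z; rewrite /covrel xz; apply/forallP => w; apply/negP => /andP[xw wz].
by have := zmin w xw; rewrite /= leqNgt rank_lt.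
Qed.

Lemma cover_lower_bound (R : realFieldType) (f : T -> R) (c : R) (bot : T) :
  (forall x, 0 < f x) -> 1 <= c -> (forall x, x != bot -> lt bot x) ->
  (forall x y, covrel x y -> f x <= c * f y) ->
  forall x, f bot / c ^+ #|T| <= f x.
Proof.
move=> f_gt0 c_ge1 botP f_cover.
have c_gt0 : 0 < c by apply: lt_le_trans c_ge1.
suff rank_bound n x : (rank x <= n)%N -> f bot / c ^+ n <= f x.
  by move=> x; apply/rank_bound/max_card.
elim: n x => [|n IH] x.
  have [-> _|/botP botx] := eqVneq x bot; first by rewrite expr0 divr1.
  by rewrite leqn0 cards_eq0 => /eqP/setP/(_ bot); rewrite !inE botx.
have [-> _|/botP/exists_lower_cover[z zx] rank_x] := eqVneq x bot.
  by rewrite ler_pdivrMr ?exprn_gt0 // ler_peMr ?exprn_ege1 // ltW.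
have /IH bound_z : (rank z <= n)%N.
  by rewrite -ltnS; apply: leq_trans rank_x; apply/rank_lt/(andP zx).1.
rewrite exprSr invfM mulrA ler_pdivrMr // [_ * c]mulrC.
exact: le_trans bound_z (f_cover _ _ zx).
Qed.

End Covers.

Lemma covrel_converse (T : finType) (lt : rel T) x y :
  covrel (fun a b => lt b a) x y = covrel lt y x.
Proof.
rewrite /covrel; congr (_ && _); apply: eq_forallb => z.
by rewrite andbC.
Qed.

Lemma cover_upper_bound (T : finType) (lt : rel T) (R : realFieldType)
    (f : T -> R) (c : R) (top : T) :
  irreflexive lt -> transitive lt ->
  (forall x, 0 < f x) -> 1 <= c -> (forall x, x != top -> lt x top) ->
  (forall x y, covrel lt x y -> f x <= c * f y) ->
  forall x, f x <= f top * c ^+ #|T|.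
Proof.
move=> ltxx lt_trans f_gt0 c_ge1 topP f_cover x.
have c_gt0 : 0 < c by apply: lt_le_trans c_ge1.
have gtr_trans : transitive (fun a b => lt b a).
  by move=> y z w zy yw; apply: lt_trans yw zy.
have inv_cover y z : covrel (fun a b => lt b a) y z -> (f y)^-1 <= c * (f z)^-1.
  rewrite covrel_converse => /f_cover zy.
  by rewrite ler_pdivlMr // ler_pdivrMl // mulrC.
have finv_gt0 y : 0 < (f y)^-1 by rewrite invr_gt0.
have := @cover_lower_bound T (fun a b => lt b a) ltxx gtr_trans R
  (fun y => (f y)^-1) c top finv_gt0 c_ge1 topP inv_cover x.
by rewrite -invfM lef_pV2 ?posrE ?mulr_gt0 ?exprn_gt0 // mulrC.
Qed.

Section BoundedPoset.
Variables (d : Order.disp_t) (P : finPOrderType d).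
Local Notation H := (hatP P).

Lemma hle_trans : transitive (@hle _ P).
Proof. by case=> [[b|]|] [[a|]|] [[c|]|] //=; apply: le_trans. Qed.

Lemma hle_anti (x y : H) : hle x y -> hle y x -> x = y.
Proof.
by case: x => [[a|]|]; case: y => [[b|]|] //= ab ba; rewrite (@le_anti _ _ a b) ?ab.
Qed.

Lemma hlt_irr : irreflexive (@hlt _ P).
Proof. by move=> x; rewrite /hlt eqxx. Qed.

Lemma hlt_trans : transitive (@hlt _ P).
Proof.
move=> y x z /andP[xy_neq xy] /andP[yz_neq yz]; rewrite /hlt (hle_trans xy yz) andbT.
by apply: contraNneq xy_neq => xz; rewrite (hle_anti xy) // xz.
Qed.

Lemma hlt0x (x : H) : x != None -> hlt None x.
Proof. by rewrite /hlt eq_sym => ->. Qed.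

Lemma hltx1 (x : H) : x != Some None -> hlt x (Some None).
Proof. by rewrite /hlt => ->; case: x => [[]|]. Qed.

Lemma hcovx0 (x : H) : hcov x None = false.
Proof. by case: x => [[]|]. Qed.

Lemma hcov1x (y : H) : hcov (Some None) y = false.
Proof. by case: y => [[]|]. Qed.

Lemma hcov_inP (a b : P) : hcov (inP a) (inP b) -> (a < b)%O.
Proof.
case/andP => /andP[ab_neq /= ab] _; rewrite lt_neqAle ab andbT.
by apply: contraNneq ab_neq => ->.
Qed.

Lemma exists_hcov_below (x : H) : x != None -> exists r, hcov r x.
Proof. by move/hlt0x/(exists_lower_cover hlt_irr hlt_trans). Qed.

Lemma exists_hcov_above (x : H) : x != Some None -> exists r, hcov x r.
Proof. by move/hltx1/(exists_upper_cover hlt_irr hlt_trans). Qed.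

End BoundedPoset.

Section Rowmotion.
Variables (d : Order.disp_t) (P : finPOrderType d) (R : realType) (alpha omega : R).
Hypotheses (alpha_gt0 : 0 < alpha) (omega_gt0 : 0 < omega).
Local Notation H := (hatP P).
Local Notation v := (hval alpha omega).
Local Notation sum_down := (sum_down alpha omega).
Local Notation sum_up_inv := (sum_up_inv alpha omega).
Local Notation rho := (browmotion alpha omega).

Lemma hval_gt0 (s : P -> R) : (forall q, 0 < s q) -> forall x, 0 < v s x.
Proof. by move=> s_gt0 [[]|]. Qed.

Lemma sum_down_gt0 (s : P -> R) q : (forall q, 0 < s q) -> 0 < sum_down s q.
Proof.
move=> s_gt0; have [r rq] := @exists_hcov_below _ P (inP q) isT.
apply: lt_le_trans (hval_gt0 s_gt0 r) _.
rewrite /Defs.sum_down; apply: (ler_sum_term (P := fun x => hcov x (inP q))) rq _.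
by move=> x _; apply/ltW/hval_gt0.
Qed.

Lemma sum_up_inv_gt0 (s : P -> R) q : (forall q, 0 < s q) -> 0 < sum_up_inv s q.
Proof.
move=> s_gt0; have [r qr] := @exists_hcov_above _ P (inP q) isT.
have v_inv_gt0 x : 0 < (v s x)^-1 by rewrite invr_gt0 hval_gt0.
apply: lt_le_trans (v_inv_gt0 r) _.
by apply: ler_sum_term qr _ => x _; apply/ltW.
Qed.

Lemma btoggle_gt0 (s : P -> R) a :
  (forall q, 0 < s q) -> forall q, 0 < btoggle alpha omega a s q.
Proof.
move=> s_gt0 q; rewrite /btoggle; case: ifP => // _.
by rewrite divr_gt0 ?mulr_gt0 ?sum_down_gt0 ?sum_up_inv_gt0.
Qed.

Lemma browmotion_gt0 (l : seq P) (s : P -> R) :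
  (forall q, 0 < s q) -> forall q, 0 < rho l s q.
Proof. by move=> s_gt0; elim: l => [|a l IH] //=; apply: btoggle_gt0. Qed.

Lemma iter_browmotion_gt0 (l : seq P) (s : P -> R) n :
  (forall q, 0 < s q) -> forall q, 0 < iter n (rho l) s q.
Proof. by move=> s_gt0; elim: n => [|n IH] //=; apply: browmotion_gt0. Qed.

Lemma browmotion_notin (l : seq P) (s : P -> R) q : q \notin l -> rho l s q = s q.
Proof.
elim: l => [|a l IH] //=; rewrite inE negb_or => /andP[qa ql].
by rewrite /btoggle (negbTE qa) IH.
Qed.

Lemma sum_up_inv_btoggle (s : P -> R) a q : ~~ (q < a)%O ->
  sum_up_inv (btoggle alpha omega a s) q = sum_up_inv s q.
Proof.
move=> qa; apply: eq_bigr => -[[b|]|] // /hcov_inP qb /=.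
by rewrite /btoggle; case: eqP => // ba; rewrite -ba qb in qa.
Qed.

Lemma browmotion_seqE (l : seq P) (s : P -> R) q :
  uniq l -> pairwise (fun x y => ~~ (y < x)%O) l -> q \in l ->
  rho l s q = sum_down s q / (s q * sum_up_inv (rho l s) q).
Proof.
elim: l => [|a l IH] //= /andP[al ul] /andP[la pl]; rewrite inE.
have [-> _|qa /= ql] := eqVneq q a.
  rewrite {1}/btoggle eqxx sum_up_inv_btoggle ?ltxx // browmotion_notin //.
  congr (_ / _); apply: eq_bigr => -[[b|]|] // /hcov_inP ba /=.
  by rewrite browmotion_notin //; apply: contraNN al => bl; have := allP la b bl; rewrite ba.
rewrite {1}/btoggle (negbTE qa) IH // sum_up_inv_btoggle //.
exact: (allP la).
Qed.

Lemma browmotionE (l : seq P) (s : P -> R) q :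
  linear_extension l -> (forall q, 0 < s q) ->
  rho l s q * (s q * sum_up_inv (rho l s) q) = sum_down s q.
Proof.
case=> l_perm l_sorted s_gt0.
rewrite (browmotion_seqE _ _ l_sorted) ?(perm_uniq l_perm) ?enum_uniq //; last first.
  by rewrite (perm_mem l_perm) mem_enum.
by rewrite mulfVK // mulf_neq0 ?gt_eqF ?sum_up_inv_gt0 //; apply: browmotion_gt0.
Qed.

Definition edge_sum (s t : P -> R) : R :=
  \sum_(x : H) \sum_(y | hcov x y) v s x / v t y.

Lemma edge_sum_by_source (s t : P -> R) : edge_sum s t =
  \sum_(y | hcov None y) alpha / v t y + \sum_q s q * sum_up_inv t q.
Proof.
rewrite /edge_sum !big_option /= [\sum_(y | hcov (Some None) y) _]big_pred0 ?add0r;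
  last exact: hcov1x.
by congr (_ + _); apply: eq_bigr => q _; rewrite mulr_sumr.
Qed.

Lemma edge_sum_by_target (s t : P -> R) : edge_sum s t =
  \sum_(x | hcov x (Some None)) v s x / omega + \sum_q sum_down s q / t q.
Proof.
rewrite /edge_sum (exchange_big_dep predT) //= !big_option /= big_pred0 ?add0r;
  last exact: hcovx0.
by congr (_ + _); apply: eq_bigr => q _; rewrite mulr_suml.
Qed.

Lemma edge_sum_browmotion (l : seq P) (s : P -> R) :
  linear_extension l -> (forall q, 0 < s q) ->
  edge_sum (rho l s) (rho l s) = edge_sum s s.
Proof.
move=> l_ext s_gt0; set t := rho l s.
have t_gt0 : forall q, 0 < t q by apply: browmotion_gt0.
have source_eq q : s q * sum_up_inv t q = sum_down s q / t q.
  by rewrite -(browmotionE q l_ext s_gt0) [RHS]mulrC mulKf ?gt_eqF.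
have self_eq q : t q * sum_up_inv t q = sum_down s q / s q.
  by rewrite -(browmotionE q l_ext s_gt0) mulrCA [RHS]mulrC mulKf ?gt_eqF.
have flow : \sum_(y | hcov None y) alpha / v t y =
            \sum_(x | hcov x (Some None)) v s x / omega.
  apply: (@addIr _ (\sum_q sum_down s q / t q)).
  rewrite -edge_sum_by_target edge_sum_by_source.
  by congr (_ + _); apply: eq_bigr => q _; rewrite source_eq.
rewrite edge_sum_by_source edge_sum_by_target flow.
by congr (_ + _); apply: eq_bigr => q _; rewrite self_eq.
Qed.

Lemma Tminus_gt0 (s : P -> R) p : (forall q, 0 < s q) -> 0 < Tminus alpha omega p s.
Proof. by move=> s_gt0; rewrite invr_gt0 mulr_gt0 ?sum_up_inv_gt0. Qed.

Lemma Tminus_browmotion (l : seq P) (s : P -> R) p :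
  linear_extension l -> (forall q, 0 < s q) ->
  Tminus alpha omega p (rho l s) = Tplus alpha omega p s.
Proof.
move=> l_ext s_gt0; rewrite /Tplus -(browmotionE p l_ext s_gt0).
by rewrite /Tminus [in RHS]mulrCA [in RHS]invfM mulVKf ?gt_eqF.
Qed.

Lemma prod_TB_iter (l : seq P) (s : P -> R) p n :
  linear_extension l -> (forall q, 0 < s q) ->
  \prod_(i < n) TB alpha omega p (iter i (rho l) s) =
  Tminus alpha omega p (iter n (rho l) s) / Tminus alpha omega p s.
Proof.
move=> l_ext s_gt0; elim: n => [|n IH].
  by rewrite big_ord0 divff // gt_eqF ?Tminus_gt0.
have sn_gt0 := iter_browmotion_gt0 l n s_gt0.
rewrite big_ord_recr /= IH /TB -(Tminus_browmotion p l_ext sn_gt0).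
by rewrite mulrC mulrA divfK // gt_eqF ?Tminus_gt0.
Qed.

Lemma row_le_edge_sum (s : P -> R) x : (forall q, 0 < s q) ->
  \sum_(y | hcov x y) v s x / v s y <= edge_sum s s.
Proof.
move=> s_gt0; apply: (ler_sum_term (P := predT)) => // z _.
by apply: sumr_ge0 => y _; apply/ltW/divr_gt0; apply: hval_gt0.
Qed.

Lemma hcov_le_edge_sum (s : P -> R) x y : (forall q, 0 < s q) ->
  hcov x y -> v s x <= edge_sum s s * v s y.
Proof.
move=> s_gt0 xy; rewrite -ler_pdivrMr ?hval_gt0 //.
apply: le_trans (row_le_edge_sum x s_gt0).
by apply: (ler_sum_term (P := hcov x)) xy _ => z _; apply/ltW/divr_gt0; apply: hval_gt0.
Qed.

Lemma edge_sum_gt0 (s : P -> R) : (forall q, 0 < s q) -> 0 < edge_sum s s.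
Proof.
move=> s_gt0; have [y y_cov] := @exists_hcov_above _ P None isT.
apply: lt_le_trans (row_le_edge_sum None s_gt0).
apply: lt_le_trans (ler_sum_term (P := hcov None) y_cov _) => [|z _].
  by rewrite divr_gt0 ?hval_gt0.
by apply/ltW/divr_gt0; apply: hval_gt0.
Qed.

Lemma hval_bounds (s : P -> R) (c : R) : (forall q, 0 < s q) -> 1 <= c ->
  (forall x y, hcov x y -> v s x <= c * v s y) ->
  forall x, alpha / c ^+ #|{: H}| <= v s x <= omega * c ^+ #|{: H}|.
Proof.
move=> s_gt0 c_ge1 s_cov x; have lt_irr := @hlt_irr _ P; have lt_trans := @hlt_trans _ P.
apply/andP; split.
  exact: (cover_lower_bound lt_irr lt_trans (hval_gt0 s_gt0) c_ge1 (@hlt0x _ P)).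
exact: (cover_upper_bound lt_irr lt_trans (hval_gt0 s_gt0) c_ge1 (@hltx1 _ P)).
Qed.

Lemma Tminus_ge (s : P -> R) p : (forall q, 0 < s q) ->
  (edge_sum s s)^-1 <= Tminus alpha omega p s.
Proof.
move=> s_gt0; rewrite lef_pV2 ?posrE ?edge_sum_gt0 ?mulr_gt0 ?sum_up_inv_gt0 //.
by rewrite /Defs.sum_up_inv mulr_sumr; apply: (row_le_edge_sum (inP p)).
Qed.

Lemma Tminus_le (s : P -> R) p (c : R) :
  (forall q, 0 < s q) -> 1 <= c -> edge_sum s s <= c ->
  Tminus alpha omega p s <= (omega * c ^+ #|{: H}|) / (alpha / c ^+ #|{: H}|).
Proof.
move=> s_gt0 c_ge1 E_le_c; have c_gt0 : 0 < c by apply: lt_le_trans c_ge1.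
have s_cov x y : hcov x y -> v s x <= c * v s y.
  move/(hcov_le_edge_sum s_gt0)/le_trans; apply.
  by rewrite ler_pM2r ?hval_gt0.
have [y py] := @exists_hcov_above _ P (inP p) isT.
have /andP[lo _] := hval_bounds s_gt0 c_ge1 s_cov (inP p).
have /andP[_ hi] := hval_bounds s_gt0 c_ge1 s_cov y.
have row : v s (inP p) / v s y <= s p * sum_up_inv s p.
  rewrite /Defs.sum_up_inv mulr_sumr.
  apply: (ler_sum_term (P := hcov (inP p))) py _ => z _.
  by apply/ltW; rewrite divr_gt0 ?s_gt0 ?hval_gt0.
apply: (@le_trans _ _ (v s y / v s (inP p))).
  by rewrite /Tminus -invf_div lef_pV2
    ?posrE ?divr_gt0 ?mulr_gt0 ?hval_gt0 ?sum_up_inv_gt0.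
apply: ler_pM => //; first exact/ltW/hval_gt0.
  by rewrite invr_ge0 ltW ?hval_gt0.
by rewrite lef_pV2 ?posrE ?divr_gt0 ?exprn_gt0 ?hval_gt0.
Qed.

End Rowmotion.

Local Open Scope classical_set_scope.

Lemma expR_scale_inv_cvg1 (R : realType) (b : R) :
  (fun n : nat => expR (n%:R^-1 * b)) @ \oo --> (1 : R).
Proof.
have scale_cvg0 : (fun n : nat => n.+1%:R^-1 * b) @ \oo --> (0 : R).
  by rewrite -(mul0r b); apply: cvgMr_tmp; exact: cvg_harmonic.
rewrite -cvg_shiftS.
by have := continuous_cvg eventually_filter (@continuous_expR R 0) scale_cvg0; rewrite expR0.
Qed.

Lemma powR_inv_cvg1 (R : realType) (a : nat -> R) (m M : R) :
  0 < m -> (forall n, m <= a n <= M) ->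
  (fun n => powR (a n) n%:R^-1) @ \oo --> (1 : R).
Proof.
move=> m_gt0 a_bnd.
apply: (squeeze_cvgr _ (expR_scale_inv_cvg1 (ln m)) (expR_scale_inv_cvg1 (ln M))).
near=> n; have /andP[am aM] := a_bnd n.
have an_gt0 : 0 < a n by apply: lt_le_trans am.
have n_inv_ge0 : 0 <= (n%:R : R)^-1 by rewrite invr_ge0.
rewrite /powR gt_eqF // !ler_expR !ler_wpM2l // !ler_ln ?posrE ?am ?aM //.
exact: lt_le_trans aM.
Unshelve. all: end_near.
Qed.

Theorem lemma6p4 (d : Order.disp_t) (P : finPOrderType d) (R : realType)
  (alpha omega : R) (l : seq P) (pi : P -> R) (p : P) :
  0 < alpha -> 0 < omega -> (forall q, 0 < pi q) ->
  linear_extension l ->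
  (fun n : nat =>
     powR (\prod_(i < n) TB alpha omega p (iter i (browmotion alpha omega l) pi))
          (n%:R^-1))
    @ \oo --> (1 : R).
Proof.
move=> alpha_gt0 omega_gt0 pi_gt0 l_ext.
pose E := edge_sum alpha omega pi pi; pose c := 1 + E; pose N := #|{: hatP P}|.
pose s n := iter n (browmotion alpha omega l) pi.
have s_gt0 n : forall q, 0 < s n q by apply: iter_browmotion_gt0.
have E_iter n : edge_sum alpha omega (s n) (s n) = E.
  by elim: n => //= n <-; apply: edge_sum_browmotion.
have E_gt0 : 0 < E by apply: edge_sum_gt0.
have T0_gt0 : 0 < Tminus alpha omega p pi by apply: Tminus_gt0.
have T0_inv_gt0 : 0 < (Tminus alpha omega p pi)^-1 by rewrite invr_gt0.
apply: (@powR_inv_cvg1 _ _ (E^-1 / Tminus alpha omega p pi)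
          ((omega * c ^+ N) / (alpha / c ^+ N) / Tminus alpha omega p pi)).
  by apply: (divr_gt0 _ T0_gt0); rewrite invr_gt0.
move=> n; rewrite prod_TB_iter // !ler_pM2r // -/(s n).
rewrite -{1}(E_iter n) Tminus_ge //= Tminus_le //; first by rewrite lerDl ltW.
by rewrite E_iter lerDr.
Qed.
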